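(* Let $\pi:P\to M$ be a principal fibre bundle with group $G=P^{-1}P$, in the setting described in the context. There is a bijective correspondence $\theta\leftrightarrow\alpha$ between horizontal equivariant $G$-valued $k$-forms $\theta$ on $P$ and $\mathbf{gauge}(PP^{-1})$-valued $k$-forms $\alpha$ on $M$, characterized by $$u_0\cdot\theta(u_0,\dots,u_k)=\alpha(\pi(u_0),\dots,\pi(u_k))\cdot u_0$$ for every infinitesimal $k$-simplex $(u_0,\dots,u_k)$ in $P$; explicitly $\alpha(a_0,\dots,a_k)=(u_0\theta(u_0,\dots,u_k))u_0^{-1}$ for any infinitesimal $k$-simplex $(u_0,\dots,u_k)$ in $P$ lying over $(a_0,\dots,a_k)$, and $\theta(u_0,\dots,u_k)=u_0^{-1}(\alpha(\pi(u_0),\dots,\pi(u_k))u_0)$.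
   Context: Setting: $\Phi$ is a groupoid whose object set contains a set $M$ and an object $*\notin M$; $P$ is the set of arrows of $\Phi$ with domain $*$ and codomain in $M$; $\pi:P\to M$ is the codomain map; $G=P^{-1}P:=\Phi( *,* )$ acts on $P$ from the right by precomposition, freely and transitively on fibres; for $x,z$ in one fibre, $x^{-1}z\in G$ is computed in $\Phi$. $PP^{-1}$ is the full subgroupoid of $\Phi$ on $M$ (arrows are composites $yx^{-1}$), acting on $P$ from the left by postcomposition. Composition is right to left. $M$ and $P$ carry reflexive symmetric neighbour relations $\sim$; an infinitesimal $k$-simplex is a $(k+1)$-tuple of mutual neighbours; $\pi$ preserves $\sim$; for every infinitesimal $k$-simplex $(a_0,\dots,a_k)$ in $M$ and every $x_0$ over $a_0$ there is an infinitesimal $k$-simplex in $P$ starting at $x_0$ lying over it; the right action of each $g\in G$ preserves $\sim$. The gauge group bundle $\mathbf{gauge}(PP^{-1})$ is the group bundle over $M$ whose fibre over $a$ is the group $PP^{-1}(a,a)$ of endo-arrows at $a$. A $\mathbf{gauge}(PP^{-1})$-valued $k$-form on $M$ assigns to each infinitesimal $k$-simplex $(a_0,\dots,a_k)$ in $M$ an element of $PP^{-1}(a_0,a_0)$. A $G$-valued $k$-form on $P$ assigns an element of $G$ to each infinitesimal $k$-simplex in $P$; it is horizontal if $\theta(u_0,u_1,\dots,u_k)=\theta(u_0,u_1g_1,\dots,u_kg_k)$ whenever $(u_0,u_1g_1,\dots,u_kg_k)$ is still an infinitesimal simplex, and equivariant if $\theta(u_0g,\dots,u_kg)=g^{-1}\theta(u_0,\dots,u_k)g$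 for all infinitesimal $k$-simplices and all $g\in G$. *)

From mathcomp Require Import all_boot.

Set Implicit Arguments.
Unset Strict Implicit.
Unset Printing Implicit Defensive.

(* A groupoid presented by its objects, arrows, domain/codomain maps and a
   total composition operation which is only meaningful on composable pairs.
   Composition is right to left: [comp g f] is "g after f", defined when
   [dom g = cod f]. *)
Record Groupoid := {
  Ob : Type;
  Ar : Type;
  dom : Ar -> Ob;
  cod : Ar -> Ob;
  idA : Ob -> Ar;
  comp : Ar -> Ar -> Ar;
  inv : Ar -> Ar;
  dom_id : forall a, dom (idA a) = a;
  cod_id : forall a, cod (idA a) = a;
  dom_comp : forall g f, dom g = cod f -> dom (comp g f) = dom f;
  cod_comp : forall g f, dom g = cod f -> cod (comp g f) = cod g;
  compA : forall h g f, dom h = cod g -> dom g = cod f ->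
            comp h (comp g f) = comp (comp h g) f;
  comp_id_l : forall f, comp (idA (cod f)) f = f;
  comp_id_r : forall f, comp f (idA (dom f)) = f;
  dom_inv : forall f, dom (inv f) = cod f;
  cod_inv : forall f, cod (inv f) = dom f;
  inv_l : forall f, comp (inv f) f = idA (dom f);
  inv_r : forall f, comp f (inv f) = idA (cod f)
}.

(* The setting of the paper: a groupoid Phi, a set M of objects, an object
   star not in M, P = arrows star -> M, pi = cod, G = Phi(star,star),
   neighbour relations on M and on P with the stated properties. *)
Record PBSetting := {
  Phi : Groupoid;
  Mset : Ob Phi -> Prop;
  star : Ob Phi;
  star_notin_M : ~ Mset star;
  nbM : Ob Phi -> Ob Phi -> Prop;
  nbP : Ar Phi -> Ar Phi -> Prop
}.

Section Defs.
Variable S : PBSetting.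
Local Notation A := (Ar (Phi S)).
Local Notation O := (Ob (Phi S)).
Local Notation comp := (@comp (Phi S)).
Local Notation inv := (@inv (Phi S)).
Local Notation dom := (@dom (Phi S)).
Local Notation cod := (@cod (Phi S)).

Definition inP (x : A) : Prop := dom x = @star S /\ @Mset S (cod x).
Definition inG (g : A) : Prop := dom g = @star S /\ cod g = @star S.
Definition bproj (x : A) : O := cod x.
Definition inGauge (a : O) (f : A) : Prop := dom f = a /\ cod f = a.

Definition simplexM (k : nat) (a : 'I_k.+1 -> O) : Prop :=
  (forall i, @Mset S (a i)) /\ (forall i j, @nbM S (a i) (a j)).
Definition simplexP (k : nat) (u : 'I_k.+1 -> A) : Prop :=
  (forall i, inP (u i)) /\ (forall i j, @nbP S (u i) (u j)).

Definition setting_axioms : Prop :=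
  (forall a, @Mset S a -> @nbM S a a) /\
  (forall a b, @nbM S a b -> @nbM S b a) /\
  (forall x, inP x -> @nbP S x x) /\
  (forall x y, @nbP S x y -> @nbP S y x) /\
  (forall x y, inP x -> inP y -> @nbP S x y -> @nbM S (bproj x) (bproj y)) /\
  (forall k (a : 'I_k.+1 -> O) (x0 : A), simplexM a -> inP x0 ->
     bproj x0 = a ord0 ->
     exists u : 'I_k.+1 -> A, simplexP u /\ u ord0 = x0 /\
                              forall i, bproj (u i) = a i) /\
  (forall g x y, inG g -> inP x -> inP y -> @nbP S x y ->
     @nbP S (comp x g) (comp y g)).

Definition pi_surjective : Prop :=
  forall a, @Mset S a -> exists x, inP x /\ bproj x = a.

Definition G_form (k : nat) (theta : ('I_k.+1 -> A) -> A) : Prop :=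
  forall u, simplexP u -> inG (theta u).
Definition gauge_form (k : nat) (alpha : ('I_k.+1 -> O) -> A) : Prop :=
  forall a, simplexM a -> inGauge (a ord0) (alpha a).

Definition act_tail (k : nat) (u g : 'I_k.+1 -> A) : 'I_k.+1 -> A :=
  fun i => if nat_of_ord i == 0 then u i else comp (u i) (g i).

Definition horizontal (k : nat) (theta : ('I_k.+1 -> A) -> A) : Prop :=
  forall (u g : 'I_k.+1 -> A), simplexP u -> (forall i, inG (g i)) ->
    simplexP (act_tail u g) -> theta u = theta (act_tail u g).

Definition equivariant (k : nat) (theta : ('I_k.+1 -> A) -> A) : Prop :=
  forall (u : 'I_k.+1 -> A) (g : A), simplexP u -> inG g ->
    theta (fun i => comp (u i) g) = comp (inv g) (comp (theta u) g).

Definition hor_equiv_form (k : nat) (theta : ('I_k.+1 -> A) -> A) : Prop :=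
  G_form theta /\ horizontal theta /\ equivariant theta.

Definition corresponds (k : nat) (theta : ('I_k.+1 -> A) -> A)
    (alpha : ('I_k.+1 -> O) -> A) : Prop :=
  forall u, simplexP u ->
    comp (u ord0) (theta u) = comp (alpha (fun i => bproj (u i))) (u ord0).

(* forms are functions on infinitesimal simplices: equality of forms *)
Definition eq_formP (k : nat) (t1 t2 : ('I_k.+1 -> A) -> A) : Prop :=
  forall u, simplexP u -> t1 u = t2 u.
Definition eq_formM (k : nat) (a1 a2 : ('I_k.+1 -> O) -> A) : Prop :=
  forall a, simplexM a -> a1 a = a2 a.

End Defs.

(* The gauge form is read off a horizontal equivariant form as
   alpha(pi u) = u_0 theta(u) u_0^-1, and everything hinges on this being
   independent of the simplex u chosen over a given base simplex.  Two such
   simplices u, v differ by g = v_0^-1 u_0 at vertex 0 and by elements of G at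
   the other vertices, so horizontality gives theta(u) = theta(v g), and
   equivariance gives theta(v g) = g^-1 theta(v) g, which conjugates by u_0 = v_0 g
   to the same value as theta(v) conjugated by v_0.  Conversely
   theta(u) = u_0^-1 alpha(pi u) u_0 only depends on u_0 and pi u, hence is
   horizontal, and it is equivariant because (u_0 g)^-1 = g^-1 u_0^-1. *)

From mathcomp Require Import all_boot.
From Pilot Require Import Defs.
From Stdlib Require Import ClassicalEpsilon FunctionalExtensionality.

Set Implicit Arguments.
Unset Strict Implicit.
Unset Printing Implicit Defensive.

Ltac dom_cod :=
  repeat match goal with
  | |- context [dom (inv ?f)] => rewrite (dom_inv f)
  | |- context [cod (inv ?f)] => rewrite (cod_inv f)
  | |- context [dom (comp ?g ?f)] => rewrite (@dom_comp _ g f); last by dom_cod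
  | |- context [cod (comp ?g ?f)] => rewrite (@cod_comp _ g f); last by dom_cod
  end; try congruence.

Section GroupoidTheory.
Variable G : Groupoid.
Implicit Types f g x : Ar G.

Definition conjg x f := comp (inv x) (comp f x).
Definition conjgV x f := comp (comp x f) (inv x).

Lemma compgK f x : dom f = cod x -> comp (comp f x) (inv x) = f.
Proof. by move=> fx; rewrite -compA ?cod_inv // inv_r -fx comp_id_r. Qed.

Lemma compgKV f x : dom f = dom x -> comp (comp f (inv x)) x = f.
Proof. by move=> fx; rewrite -compA ?cod_inv ?dom_inv // inv_l -fx comp_id_r. Qed.

Lemma compKg x f : dom x = cod f -> comp (inv x) (comp x f) = f.
Proof. by move=> xf; rewrite compA ?dom_inv // inv_l xf comp_id_l. Qed.

Lemma compKVg x f : cod x = cod f -> comp x (comp (inv x) f) = f.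
Proof. by move=> xf; rewrite compA ?cod_inv ?dom_inv // inv_r xf comp_id_l. Qed.

Lemma compgI x f f' : dom x = cod f -> dom x = cod f' ->
  comp x f = comp x f' -> f = f'.
Proof. by move=> xf xf' E; rewrite -(compKg xf) -(compKg xf') E. Qed.

Lemma inv_comp f g : dom f = cod g -> inv (comp f g) = comp (inv g) (inv f).
Proof.
move=> fg; apply: (compgI (x := comp f g)); dom_cod.
rewrite inv_r -compA; dom_cod.
by rewrite compKVg ?inv_r; dom_cod.
Qed.

Lemma conjgM f x g : dom f = cod x -> cod f = cod x -> dom x = cod g ->
  conjg (comp x g) f = conjg g (conjg x f).
Proof.
move=> fx xf xg; rewrite /conjg inv_comp // -compA; dom_cod.
rewrite (@compA _ f x g); dom_cod.
by rewrite (@compA _ (inv x) (comp f x) g); dom_cod.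
Qed.

Lemma conjgV_comp_conjg f x g :
  dom f = cod g -> cod f = cod g -> dom x = cod g ->
  conjgV (comp x g) (conjg g f) = conjgV x f.
Proof.
move=> fg gf xg; rewrite /conjgV /conjg inv_comp // -(@compA _ x g); dom_cod.
rewrite compKVg; dom_cod.
rewrite (@compA _ x f g); dom_cod.
rewrite -compA; dom_cod.
by rewrite compKVg; dom_cod.
Qed.

End GroupoidTheory.

Section PrincipalBundle.
Variable S : PBSetting.
Local Notation A := (Ar (Phi S)).
Local Notation O := (Ob (Phi S)).
Implicit Types (x y f g : A).

Lemma inP_actr x g : inP x -> inG g -> inP (comp x g).
Proof. by move=> [x1 x2] [g1 g2]; split; dom_cod. Qed.

Lemma bproj_actr x g : inP x -> inG g -> bproj (comp x g) = bproj x.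
Proof. by move=> [x1 _] [_ g2]; rewrite /bproj; dom_cod. Qed.

Lemma inG_div x y : inP x -> inP y -> bproj x = bproj y -> inG (comp (inv x) y).
Proof. by move=> [x1 _] [y1 _]; rewrite /bproj => xy; split; dom_cod. Qed.

Lemma inGauge_conjg x f : inGauge (cod x) f -> inGauge (dom x) (conjg x f).
Proof. by rewrite /conjg => -[f1 f2]; split; dom_cod. Qed.

Lemma inGauge_conjgV x f : inGauge (dom x) f -> inGauge (cod x) (conjgV x f).
Proof. by rewrite /conjgV => -[f1 f2]; split; dom_cod. Qed.

Hypothesis axS : setting_axioms S.
Variable k : nat.
Implicit Types (u v w : 'I_k.+1 -> A) (theta : ('I_k.+1 -> A) -> A)
  (alpha : ('I_k.+1 -> O) -> A).
Local Notation base u := (fun i => bproj (u i)).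

Lemma simplexM_base u : simplexP u -> simplexM (base u).
Proof.
case: axS => _ [_ [_ [_ [nb_bproj _]]]] [uP u_nb]; split=> [i | i j].
  by case: (uP i).
exact: nb_bproj.
Qed.

Lemma simplexP_actr u g : simplexP u -> inG g -> simplexP (fun i => comp (u i) g).
Proof.
case: axS => _ [_ [_ [_ [_ [_ nb_actr]]]]] [uP u_nb] gG; split=> [i | i j].
  exact: inP_actr.
exact: nb_actr.
Qed.

Lemma base_actr u g : simplexP u -> inG g -> base (fun i => comp (u i) g) = base u.
Proof. by move=> [uP _] gG; apply: functional_extensionality => i; apply: bproj_actr. Qed.

Lemma base_act_tail u (g : 'I_k.+1 -> A) : simplexP u -> (forall i, inG (g i)) ->
  base (act_tail u g) = base u.
Proof.
move=> [uP _] gG; apply: functional_extensionality => i; rewrite /act_tail.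
by case: eqP => // _; apply: bproj_actr.
Qed.

Lemma horizontal_same_base theta u w : horizontal theta ->
  simplexP u -> simplexP w -> u ord0 = w ord0 -> base u = base w ->
  theta u = theta w.
Proof.
move=> hor Hu Hw uw0 uw.
have wu i : bproj (w i) = bproj (u i) := esym (congr1 (fun b => b i) uw).
pose h i := comp (inv (w i)) (u i).
have hG i : inG (h i) by apply: inG_div; [case: Hw | case: Hu | exact: wu].
have tail_u : act_tail w h = u.
  apply: functional_extensionality => i; rewrite /act_tail /h.
  case: eqP => [i0 | _]; first by rewrite (_ : i = ord0) //; apply: val_inj.
  by rewrite compKVg //; exact: wu.
by rewrite (hor w h) ?tail_u.
Qed.

Definition gauge_at theta u := conjgV (u ord0) (theta u).

Lemma gauge_at_same_base theta u v : hor_equiv_form theta ->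
  simplexP u -> simplexP v -> base u = base v -> gauge_at theta u = gauge_at theta v.
Proof.
move=> [thetaG [hor equiv]] Hu Hv uv.
have [[u0 _] [v0 _]] := (proj1 Hu ord0, proj1 Hv ord0).
have [tv1 tv2] := thetaG v Hv.
have vu0 : bproj (v ord0) = bproj (u ord0) := esym (congr1 (fun b => b ord0) uv).
pose g := comp (inv (v ord0)) (u ord0).
have gG : inG g by apply: inG_div; [case: Hv | case: Hu | exact: vu0].
have vg0 : comp (v ord0) g = u ord0 by rewrite compKVg //; exact: vu0.
have theta_vg : theta (fun i => comp (v i) g) = theta u.
  apply: horizontal_same_base => //; first exact: simplexP_actr.
  by rewrite base_actr.
case: gG => g1 g2.
by rewrite /gauge_at -vg0 -theta_vg equiv // conjgV_comp_conjg; dom_cod.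
Qed.

Lemma simplexM_lift : pi_surjective S ->
  forall a : 'I_k.+1 -> O, simplexM a -> exists2 u, simplexP u & base u = a.
Proof.
case: axS => _ [_ [_ [_ [_ [lifting _]]]]] surj a Ha.
have [x [xP xa]] := surj _ (proj1 Ha ord0).
have [u [Hu [_ ua]]] := lifting k a x Ha xP xa.
by exists u => //; apply: functional_extensionality.
Qed.

Definition lift (a : 'I_k.+1 -> O) : 'I_k.+1 -> A :=
  epsilon (inhabits (fun=> idA (star S))) (fun u : 'I_k.+1 -> A => simplexP u /\ base u = a).

Lemma lift_spec : pi_surjective S ->
  forall a : 'I_k.+1 -> O, simplexM a -> simplexP (lift a) /\ base (lift a) = a.
Proof.
move=> surj a Ha; have [u Hu ua] := simplexM_lift surj Ha.
by apply: (epsilon_spec _ (fun v : 'I_k.+1 -> A => simplexP v /\ base v = a)); exists u.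
Qed.

Definition gauge_of theta a := gauge_at theta (lift a).

Lemma gauge_form_gauge_of theta : pi_surjective S ->
  G_form theta -> gauge_form (gauge_of theta).
Proof.
move=> surj thetaG a Ha; rewrite /gauge_of.
move: (lift a) (lift_spec surj Ha) => v [Hv <-].
apply: inGauge_conjgV; rewrite (proj1 (proj1 Hv ord0)).
exact: thetaG.
Qed.

Lemma corresponds_gauge_of theta : pi_surjective S ->
  hor_equiv_form theta -> corresponds theta (gauge_of theta).
Proof.
move=> surj Htheta u Hu; have [thetaG _] := Htheta.
have [[u0 _] [t1 t2]] := (proj1 Hu ord0, thetaG u Hu).
have [Hv vu] := lift_spec surj (simplexM_base Hu).
by rewrite /gauge_of (gauge_at_same_base Htheta Hv Hu vu) /gauge_at /conjgV compgKV; dom_cod.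
Qed.

Definition form_of alpha u := conjg (u ord0) (alpha (base u)).

Lemma G_form_form_of alpha : gauge_form alpha -> G_form (form_of alpha).
Proof.
move=> alphaG u Hu; have [u0 _] := proj1 Hu ord0.
rewrite /inG -u0; apply: inGauge_conjg.
exact: alphaG (simplexM_base Hu).
Qed.

Lemma horizontal_form_of alpha : horizontal (form_of alpha).
Proof. by move=> u g Hu gG _; rewrite /form_of base_act_tail. Qed.

Lemma equivariant_form_of alpha : gauge_form alpha -> equivariant (form_of alpha).
Proof.
move=> alphaG u g Hu [g1 g2]; have [u0 _] := proj1 Hu ord0.
have [a1 a2] := alphaG _ (simplexM_base Hu).
by rewrite /form_of base_actr // conjgM; dom_cod.
Qed.

Lemma hor_equiv_form_of alpha : gauge_form alpha -> hor_equiv_form (form_of alpha).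
Proof.
move=> alphaG; split; first exact: G_form_form_of.
by split; [exact: horizontal_form_of | exact: equivariant_form_of].
Qed.

Lemma corresponds_form_of alpha : gauge_form alpha -> corresponds (form_of alpha) alpha.
Proof.
move=> alphaG u Hu; have [a1 a2] := alphaG _ (simplexM_base Hu).
by rewrite /form_of /conjg compKVg; dom_cod.
Qed.

Lemma corresponds_gaugeE theta alpha u : gauge_form alpha ->
  corresponds theta alpha -> simplexP u -> alpha (base u) = gauge_at theta u.
Proof.
move=> alphaG C Hu; have [a1 _] := alphaG _ (simplexM_base Hu).
by rewrite /gauge_at /conjgV (C u Hu) compgK.
Qed.

Lemma corresponds_formE theta alpha u : G_form theta ->
  corresponds theta alpha -> simplexP u -> theta u = form_of alpha u.
Proof.
move=> thetaG C Hu; have [_ t2] := thetaG u Hu; have [u0 _] := proj1 Hu ord0.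
by rewrite /form_of /conjg -(C u Hu) compKg; dom_cod.
Qed.

Lemma corresponds_gauge_uniq theta alpha alpha' : pi_surjective S ->
  gauge_form alpha -> gauge_form alpha' ->
  corresponds theta alpha -> corresponds theta alpha' -> eq_formM alpha alpha'.
Proof.
move=> surj alphaG alphaG' C C' a Ha; have [u Hu <-] := simplexM_lift surj Ha.
by rewrite (corresponds_gaugeE alphaG C Hu) (corresponds_gaugeE alphaG' C' Hu).
Qed.

Lemma corresponds_form_uniq theta theta' alpha : G_form theta -> G_form theta' ->
  corresponds theta alpha -> corresponds theta' alpha -> eq_formP theta theta'.
Proof.
move=> thetaG thetaG' C C' u Hu.
by rewrite (corresponds_formE thetaG C Hu) (corresponds_formE thetaG' C' Hu).
Qed.

End PrincipalBundle.

Theorem proposition3 (S : PBSetting) (k : nat) :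
  setting_axioms S -> pi_surjective S ->
  (* theta |-> alpha: existence and uniqueness *)
  (forall theta : ('I_k.+1 -> Ar (Phi S)) -> Ar (Phi S),
     hor_equiv_form theta ->
     exists alpha : ('I_k.+1 -> Ob (Phi S)) -> Ar (Phi S),
       gauge_form alpha /\ corresponds theta alpha /\
       forall alpha', gauge_form alpha' -> corresponds theta alpha' ->
                      eq_formM alpha alpha') /\
  (* alpha |-> theta: existence and uniqueness *)
  (forall alpha : ('I_k.+1 -> Ob (Phi S)) -> Ar (Phi S),
     gauge_form alpha ->
     exists theta : ('I_k.+1 -> Ar (Phi S)) -> Ar (Phi S),
       hor_equiv_form theta /\ corresponds theta alpha /\
       forall theta', hor_equiv_form theta' -> corresponds theta' alpha ->
                      eq_formP theta theta') /\
  (* explicit formulas *)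
  (forall (theta : ('I_k.+1 -> Ar (Phi S)) -> Ar (Phi S))
          (alpha : ('I_k.+1 -> Ob (Phi S)) -> Ar (Phi S)),
     hor_equiv_form theta -> gauge_form alpha -> corresponds theta alpha ->
     forall u, simplexP u ->
       alpha (fun i => bproj (u i)) =
         @Defs.comp (Phi S) (@Defs.comp (Phi S) (u ord0) (theta u)) (@Defs.inv (Phi S) (u ord0)) /\
       theta u =
         @Defs.comp (Phi S) (@Defs.inv (Phi S) (u ord0))
              (@Defs.comp (Phi S) (alpha (fun i => bproj (u i))) (u ord0))).
Proof.
move=> axS surj; split; [|split].
- move=> theta Htheta; exists (gauge_of theta).
  have C := corresponds_gauge_of axS surj Htheta.
  have alphaG := gauge_form_gauge_of axS surj (proj1 Htheta).
  do 2!split=> //; move=> alpha' alphaG' C'.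
  exact: (corresponds_gauge_uniq axS surj alphaG alphaG' C C').
- move=> alpha alphaG; exists (form_of alpha).
  have Htheta := hor_equiv_form_of axS alphaG.
  have C := corresponds_form_of axS alphaG.
  do 2!split=> //; move=> theta' [theta'G _] C'.
  exact: (corresponds_form_uniq (proj1 Htheta) theta'G C C').
- move=> theta alpha [thetaG _] alphaG C u Hu.
  split; [exact: (corresponds_gaugeE axS alphaG C Hu) | exact: (corresponds_formE thetaG C Hu)].
Qed.
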